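(* Let $q=8m+3$ be a prime power ($m\ge1$), and let $I$, $E_0,E_1,E_2,E_3$ be as in the context. Then in $\mathbb{Z}[(\mathbb{F}_{q^2},+)]$, $$E_0E_1^{(-1)}+E_1E_0^{(-1)}+E_2E_3^{(-1)}+E_3E_2^{(-1)}=\sum_{h=0,1}\sum_{i,j\in I}\Big(C_{i+h}^{(8,q^2)}\big(C_{j+2+h}^{(8,q^2)}\big)^{(-1)}+C_{i+2+h}^{(8,q^2)}\big(C_{j+h}^{(8,q^2)}\big)^{(-1)}\Big)+8m(4m+1)\cdot 0_{\mathbb{F}_{q^2}}+m(28m+5)\,\mathbb{F}_{q^2}^\ast.$$
   Context: Let $\omega$ be a primitive element of $\mathbb{F}_{q^2}$, $C_i^{(N,q^2)}=\omega^i\langle\omega^N\rangle$ for $N\mid q^2-1$ (index mod $N$), and $L_i=C_i^{(q+1,q^2)}$ (index mod $q+1$). Let $I\subseteq\{0,1,\dots,7\}$ with $|I|=3$ and $I\cap\{x+4\bmod 8:x\in I\}=\emptyset$; let $y$ be the unique element of $I$ whose parity differs from that of the other two. Let $J_1=\{y+2+4i\bmod (q+1):0\le i\le m-1\}$ and $J_2=\{y+4i\bmod(q+1):0\le i\le m-1\}$. Define $E_0=\bigcup_{i\in I}C_i^{(8,q^2)}\cup\bigcup_{i\in J_1}L_i$, $E_1=\bigcup_{i\in I}C_{i+2}^{(8,q^2)}\cup\bigcup_{i\in J_2}L_i$, $E_2=\bigcup_{i\in I}C_{i+1}^{(8,q^2)}\cup\bigcup_{i\in J_1}L_{i+1}$,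 $E_3=\bigcup_{i\in I}C_{i+3}^{(8,q^2)}\cup\bigcup_{i\in J_2}L_{i+1}$. Subsets are identified with group ring elements $\sum_{x\in X}x$, $X^{(-1)}=\{-x:x\in X\}$, $\mathbb{F}_{q^2}^\ast=\mathbb{F}_{q^2}\setminus\{0\}$, and $0_{\mathbb{F}_{q^2}}$ is the identity of the group ring. *)

From HB Require Import structures.
From mathcomp Require Import all_boot all_order all_algebra all_field.
Set Implicit Arguments. Unset Strict Implicit. Unset Printing Implicit Defensive.
Import GRing.Theory.
Local Open Scope ring_scope.

(* Cyclotomic class w^i <w^N> in a finite field F, where w is a primitive
   element (generator of F^*, of order #|F|-1).  Since w^N generates the
   subgroup <w^N>, k ranging over 0..#|F|-2 covers all of it.  The index i
   is a nat; i is effectively taken mod N because N | #|F|-1. *)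
Definition cyc (F : finFieldType) (w : F) (N i : nat) : {set F} :=
  [set w ^+ (i + N * k)%N | k : 'I_(#|F|.-1)].

(* Group ring Z[(F,+)]: an element is its coefficient function F -> int.
   For subsets A, B, the product A * B^(-1) has coefficient at z equal to
   #{(x,y) in A x B | x - y = z}. *)
Definition grmulinv (F : finFieldType) (A B : {set F}) (z : F) : int :=
  (\sum_(x in A) \sum_(y in B) nat_of_bool (x - y == z)%R)%N%:Z.

Definition E0 (F : finFieldType) (w : F) (q m y : nat) (I : {set 'I_8}) : {set F} :=
  (\bigcup_(i in I) cyc w 8 i) :|: \bigcup_(i < m) cyc w q.+1 ((y + 2 + 4 * i) %% q.+1).
Definition E1 (F : finFieldType) (w : F) (q m y : nat) (I : {set 'I_8}) : {set F} :=
  (\bigcup_(i in I) cyc w 8 (i + 2)) :|: \bigcup_(i < m) cyc w q.+1 ((y + 4 * i) %% q.+1).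
Definition E2 (F : finFieldType) (w : F) (q m y : nat) (I : {set 'I_8}) : {set F} :=
  (\bigcup_(i in I) cyc w 8 (i + 1)) :|: \bigcup_(i < m) cyc w q.+1 ((y + 2 + 4 * i) %% q.+1 + 1).
Definition E3 (F : finFieldType) (w : F) (q m y : nat) (I : {set 'I_8}) : {set F} :=
  (\bigcup_(i in I) cyc w 8 (i + 3)) :|: \bigcup_(i < m) cyc w q.+1 ((y + 4 * i) %% q.+1 + 1).

From HB Require Import structures.
From mathcomp Require Import all_boot all_order all_algebra all_field zify ring.
Import GRing.Theory.

(* Lemma 3.3.  Let q = 8m + 3 be a prime power, F = F_(q^2) with primitive element w,
   C_i = C_i^(8,q^2) and L_j = C_j^(q+1,q^2).
   Group ring elements are represented by coefficient functions F -> int, and the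
   coefficient of z in f g^(-1) is the correlation  corr f g z = sum_y f (z + y) g y.
   The argument:
   - L_0 = F_q^*, hence L_j = w^j F_q^*, and for j <> k (mod q + 1) the field is
     w^j F_q (+) w^k F_q; this gives L_j L_k^(-1) = F^* - L_j - L_k (corr_lines),
     and by bilinearity the product of two families of lines.
   - Each E_h is a disjoint union A_s + B_c of the classes C_(i+s), i in I, and m
     lines L_c, L_(c+4), ..., with c = y + 2 + s (mod 4) (ind_classes_lines).
   - As -1 = w^((q^2-1)/2) and (q^2-1)/2 = 4 (mod 8), the condition on I (a finite
     check over the subsets of Z/8, I_residue_partition) yields A_s + A_s^(-) =
     F^* - D_c, where D_c is the union of the lines with index c (mod 4).
   - Expanding each pair E_0, E_1 and E_2, E_3 (corr_pair_lines) leaves the cross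
     terms of the statement plus multiples of {0} and F^*; the four D_c partition F^*. *)

Lemma count_progression (a c M : nat) : a < 4 * M -> c < 4 ->
  \sum_(i < M) (a == c + 4 * i) = (a %% 4 == c).
Proof.
move=> lt_a lt_c; have [ac | nac] := boolP (a %% 4 == c).
  have lt_aM : a %/ 4 < M by lia.
  rewrite (bigD1 (Ordinal lt_aM)) //= big1 ?addn0.
    by apply/eqP; move/eqP: ac; lia.
  by move=> i ne_i; case: eqP => // aE; case/eqP: ne_i; apply: val_inj => /=; lia.
by rewrite big1 // => i _; case: eqP => // aE; case/negP: nac; apply/eqP; lia.
Qed.

(* The hypotheses on (I, y), read on the characteristic sequence bs of I, imply
   that for every r < 8 exactly one of  r \in I,  r + 4 \in I,  r = y + 2 (mod 4)
   holds.  Being a statement about 8 booleans, it is checked on all 256 cases. *)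
Definition residue_partition_check (bs : seq bool) (y : nat) : bool :=
  let c k := nth false bs k in
  [==> count id bs == 3,
       all (fun x => c x ==> ~~ c ((x + 4) %% 8)) (iota 0 8),
       c y,
       all (fun x => c x ==> (x != y) ==> (odd x != odd y)) (iota 0 8)
   => all (fun r => c r + c ((r + 4) %% 8) + (r %% 4 == (y + 2) %% 4) == 1) (iota 0 8)].

Lemma residue_partition_check_all (b0 b1 b2 b3 b4 b5 b6 b7 : bool) :
  all (residue_partition_check [:: b0; b1; b2; b3; b4; b5; b6; b7]) (iota 0 8).
Proof. by move: b0 b1 b2 b3 b4 b5 b6 b7; do 8!case; vm_compute. Qed.

Lemma sum_in_eq (T : finType) (A : {set T}) (j : T) : \sum_(i in A) (i == j) = (j \in A).
Proof.
have [jA | jnA] := boolP (j \in A).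
  by rewrite (bigD1 j) //= eqxx big1 ?addn0 // => i /andP [_ /negbTE ->].
by rewrite big1 // => i iA; case: eqP => // ij; rewrite -ij iA in jnA.
Qed.

Section IndexSet.
Variables (I : {set 'I_8}) (y : 'I_8).
Hypothesis card_I : #|I| = 3.
Hypothesis I_antipodal : forall x : 'I_8, x \in I -> (inord ((x + 4) %% 8) : 'I_8) \notin I.
Hypothesis yI : y \in I.
Hypothesis y_parity : forall x : 'I_8, x \in I -> x != y -> odd x != odd y.

Lemma I_residue_partition (r : nat) : r < 8 ->
  ((inord r : 'I_8) \in I) + ((inord ((r + 4) %% 8) : 'I_8) \in I) + (r %% 4 == (y + 2) %% 4) = 1.
Proof.
move=> lt_r8; pose bs := [seq (inord k : 'I_8) \in I | k <- iota 0 8].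
have bsE k : k < 8 -> nth false bs k = ((inord k : 'I_8) \in I).
  by move=> lt_k8; rewrite (nth_map 0) ?size_iota // nth_iota.
have countE : count id bs = #|I|.
  rewrite count_map -sum1_card (eq_bigl (fun i : 'I_8 => (inord i : 'I_8) \in I)).
    by rewrite -(big_mkord (fun k => (inord k : 'I_8) \in I) (fun _ => 1)) sum1_count.
  by move=> i; rewrite inord_val.
have antipodal : all (fun x => nth false bs x ==> ~~ nth false bs ((x + 4) %% 8)) (iota 0 8).
  apply/allP => x; rewrite mem_iota /= => lt_x8; rewrite !bsE ?ltn_pmod //.
  by apply/implyP => /(I_antipodal (inord x)); rewrite inordK.
have parity : all (fun x => nth false bs x ==> (x != y) ==> (odd x != odd y)) (iota 0 8).
  apply/allP => x; rewrite mem_iota /= => lt_x8; rewrite bsE //.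
  apply/implyP => /y_parity xy; apply/implyP => ne_xy; move: xy; rewrite inordK //.
  by apply; apply: contra ne_xy => /eqP <-; rewrite inordK.
have := allP (residue_partition_check_all (nth false bs 0) (nth false bs 1) (nth false bs 2)
  (nth false bs 3) (nth false bs 4) (nth false bs 5) (nth false bs 6) (nth false bs 7)) y.
have -> : [:: nth false bs 0; nth false bs 1; nth false bs 2; nth false bs 3;
  nth false bs 4; nth false bs 5; nth false bs 6; nth false bs 7] = bs by [].
rewrite mem_iota ltn_ord /residue_partition_check countE card_I antipodal parity.
rewrite bsE // inord_val yI => /(_ isT) /allP /(_ r); rewrite mem_iota => /(_ lt_r8) /eqP.
by rewrite !bsE ?ltn_pmod.
Qed.

Lemma I_shift_partition (a s : nat) :
  \sum_(i in I) (a %% 8 == (i + s) %% 8) + \sum_(i in I) ((a + 4) %% 8 == (i + s) %% 8)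
  + (a %% 4 == (y + 2 + s) %% 4) = 1.
Proof.
set r := (a + 7 * s) %% 8.
have lt_r8 : r < 8 by rewrite ltn_pmod.
have count_in (b : nat) (lt_b8 : b < 8) (c : nat) : c = b + s %[mod 8] ->
    \sum_(i in I) (c %% 8 == (i + s) %% 8) = ((inord b : 'I_8) \in I).
  move=> cE; rewrite (eq_bigr (fun i => nat_of_bool (i == inord b))) ?sum_in_eq //.
  move=> i _; congr nat_of_bool; rewrite -val_eqE /= inordK // cE.
  by rewrite eqn_modDr !modn_small // eq_sym.
rewrite (count_in r) //; last by rewrite /r; lia.
rewrite (count_in ((r + 4) %% 8)) ?ltn_pmod //; last by rewrite /r; lia.
have -> : (a %% 4 == (y + 2 + s) %% 4) = (r %% 4 == (y + 2) %% 4) by rewrite /r; apply/eqP/eqP; lia.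
exact: I_residue_partition.
Qed.

Lemma I_avoids (i : 'I_8) : i \in I -> i %% 4 != (y + 2) %% 4.
Proof.
move=> iI; have := @I_residue_partition i (ltn_ord i).
by rewrite inord_val iI; case: (_ \in _); case: (_ == _).
Qed.
End IndexSet.

Local Open Scope ring_scope.

(* An element of the group ring Z[(V,+)] is represented by its coefficient function
   V -> int: ind A is the set A, nonzero is V^* = V - {0}, and corr f g z is the
   coefficient of z in f g^(-1). *)
Definition ind (V : finZmodType) (A : {set V}) (x : V) : int := (x \in A)%:Z.
Definition nonzero (V : finZmodType) (x : V) : int := (x != 0)%:Z.
Definition corr (V : finZmodType) (f g : V -> int) (z : V) : int :=
  \sum_(y : V) f (z + y) * g y.

Arguments ind {V} A x.
Arguments nonzero {V} x.
Arguments corr {V} f g z.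

Section GroupRingCoefficients.
Context {V : finZmodType}.
Implicit Types (f g h : V -> int) (z : V) (A B : {set V}).

Lemma eq_corr {f f' g g' : V -> int} z : f =1 f' -> g =1 g' -> corr f g z = corr f' g' z.
Proof. by move=> ef eg; apply: eq_bigr => y _; rewrite ef eg. Qed.

Lemma corrDl f1 f2 g z : corr (fun x => f1 x + f2 x) g z = corr f1 g z + corr f2 g z.
Proof. by rewrite /corr -big_split; apply: eq_bigr => y _; rewrite mulrDl. Qed.

Lemma corrDr f g1 g2 z : corr f (fun x => g1 x + g2 x) z = corr f g1 z + corr f g2 z.
Proof. by rewrite /corr -big_split; apply: eq_bigr => y _; rewrite mulrDr. Qed.

Lemma corrBl f1 f2 g z : corr (fun x => f1 x - f2 x) g z = corr f1 g z - corr f2 g z.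
Proof. by rewrite /corr -sumrB; apply: eq_bigr => y _; rewrite mulrBl. Qed.

Lemma corr_suml (J : Type) (r : seq J) (P : pred J) (F : J -> V -> int) g z :
  corr (fun x => \sum_(i <- r | P i) F i x) g z = \sum_(i <- r | P i) corr (F i) g z.
Proof.
rewrite /corr exchange_big; apply: eq_bigr => y _; exact: mulr_suml.
Qed.

Lemma corr_sumr (J : Type) (r : seq J) (P : pred J) f (G : J -> V -> int) z :
  corr f (fun x => \sum_(i <- r | P i) G i x) z = \sum_(i <- r | P i) corr f (G i) z.
Proof.
rewrite /corr exchange_big; apply: eq_bigr => y _; exact: mulr_sumr.
Qed.

Lemma corr_swap f g z : (forall t, g (- t) = g t) -> corr g f z = corr (fun x => f (- x)) g z.
Proof.
move=> g_sym; rewrite /corr.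
have inj : injective (fun y : V => - y - z) by move=> a b /addIr /oppr_inj.
rewrite (reindex_inj inj) /=; apply: eq_bigr => y _.
by rewrite addrC subrK -opprD addrC g_sym mulrC.
Qed.

Lemma corr_add_swap f g h z : (forall t, g (- t) = g t) ->
  (forall t, f t + f (- t) = h t) -> corr f g z + corr g f z = corr h g z.
Proof.
by move=> g_sym f_sym; rewrite [corr g f z]corr_swap // -corrDl; apply: eq_corr.
Qed.

Lemma sum_ind A : \sum_(y : V) ind A y = #|A|%:Z.
Proof.
rewrite -sum1_card (big_mkcond (mem A)) /= (big_morph Posz PoszD (erefl _)).
by apply: eq_bigr => y _; rewrite /ind; case: (y \in A).
Qed.

Lemma corr_nonzero g z : corr nonzero g z = \sum_(y : V) g y - g (- z).
Proof.
rewrite /corr (bigD1 (- z)) //= [X in _ = X - _](bigD1 (- z)) //= addrN /nonzero eqxx mul0r add0r.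
rewrite addrC addrK; apply: eq_bigr => y hy.
by rewrite addrC addr_eq0 (negbTE hy) mul1r.
Qed.

Lemma ind_setU A B x : (x \in A -> x \in B -> False) ->
  ind (A :|: B) x = ind A x + ind B x.
Proof. by rewrite /ind inE; case: (x \in A); case: (x \in B) => //= /(_ isT isT). Qed.

Lemma ind_bigcup (J : finType) (P : pred J) (S : J -> {set V}) x :
  (forall i j, P i -> P j -> i != j -> x \in S i -> x \in S j -> False) ->
  ind (\bigcup_(i | P i) S i) x = \sum_(i | P i) ind (S i) x.
Proof.
move=> disj; have [xS | xnS] := boolP (x \in \bigcup_(i | P i) S i).
  have /bigcupP [i Pi xi] := xS.
  rewrite [RHS](bigD1 i) //= [X in _ + X]big1 ?addr0; first by rewrite /ind xi xS.
  move=> j /andP [Pj ji]; rewrite /ind; case: (boolP (x \in S j)) => // xj.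
  by case: (disj i j) => //; rewrite eq_sym.
rewrite /ind (negbTE xnS) big1 // => i Pi; case: (boolP (x \in S i)) => // xi.
by case/negP: xnS; apply/bigcupP; exists i.
Qed.

End GroupRingCoefficients.

Lemma grmulinvE (F : finFieldType) (A B : {set F}) z :
  grmulinv A B z = corr (ind A) (ind B) z.
Proof.
rewrite /grmulinv /corr exchange_big /= (big_morph Posz PoszD (erefl _)).
rewrite [RHS](bigID (mem B)) /= [X in _ = _ + X]big1 ?addr0; last first.
  by move=> y /negbTE yB; rewrite /ind yB mulr0.
apply: eq_bigr => y yB; rewrite /ind yB mulr1; congr Posz.
under eq_bigr => x _ do rewrite subr_eq.
have [zyA | zynA] := boolP (z + y \in A).
  by rewrite (bigD1 (z + y)) //= eqxx big1 ?addn0 // => x /andP [_ /negbTE ->].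
by rewrite big1 // => x xA; case: eqP => // e; case/negP: zynA; rewrite -e.
Qed.

Section CyclotomicClasses.
Variables (F : finFieldType) (w : F).
Local Notation n := #|F|.-1.
Hypothesis w_prim : n.-primitive_root w.

Lemma n_gt0 : (0 < n)%N.
Proof. by rewrite -ltnS prednK ?finNzRing_gt1 // (ltn_trans _ (finNzRing_gt1 F)). Qed.

Lemma expw_neq0 a : w ^+ a != 0.
Proof.
apply: expf_neq0; apply: contra_eq_neq (prim_expr_order w_prim) => ->.
by rewrite expr0n -(prednK n_gt0) eq_sym oner_eq0.
Qed.

Lemma expw_onto {x : F} : x != 0 -> exists a, x = w ^+ a.
Proof.
move=> x0; have xn1 : x ^+ n = 1.
  apply: (mulfI x0); rewrite -exprS mulr1 prednK ?expf_card //.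
  exact: ltn_trans (finNzRing_gt1 F).
by have [i ->] := prim_rootP w_prim xn1; exists i.
Qed.

Lemma expw_eq a b : (w ^+ a == w ^+ b) = (a == b %[mod n]).
Proof. exact: eq_prim_root_expr. Qed.

Lemma cyc0 N i : (0 : F) \notin cyc w N i.
Proof. by apply/imsetP => -[k _ /esym /eqP]; rewrite (negbTE (expw_neq0 _)). Qed.

Section Divisor.
Variable N : nat.
Hypotheses (N_gt0 : (0 < N)%N) (N_dvd_n : (N %| n)%N).

Lemma mem_cyc i a : (w ^+ a \in cyc w N i) = (a == i %[mod N]).
Proof.
apply/imsetP/idP => [[k _ /eqP] | /eqP aE].
  rewrite expw_eq => /eqP akE; apply/eqP.
  by rewrite -(modn_dvdm a N_dvd_n) akE (modn_dvdm _ N_dvd_n) addnC mulnC modnMDl.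
set d := (n %/ N)%N; have nE : n = (N * d)%N by rewrite /d mulnC divnK.
have d_gt0 : (0 < d)%N by move: n_gt0; rewrite nE muln_gt0 => /andP [].
(* a + n i = i + t N for some t; reducing t modulo d gives an index below n. *)
have le_i : (i <= a + n * i)%N.
  by rewrite addnC (leq_trans (leq_pmull i n_gt0)) ?leq_addr.
have /dvdnP [t tE] : (N %| a + n * i - i)%N.
  by rewrite -eqn_mod_dvd // -modnDmr (eqP (dvdn_mulr i N_dvd_n)) addn0 aE.
have lt_td : (t %% d < n)%N by rewrite (leq_trans (ltn_pmod t d_gt0)) // nE leq_pmull.
exists (Ordinal lt_td) => //=; apply/eqP; rewrite expw_eq -(modnMDl i a).
have -> : (i * n + a = (t %/ d) * n + (i + N * (t %% d)))%N.
  by rewrite mulnC addnC -(subnKC le_i) tE {1}(divn_eq t d) nE; ring.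
by rewrite modnMDl.
Qed.

Lemma cyc_eq i j : i = j %[mod N] -> cyc w N i = cyc w N j.
Proof.
move=> ijE; apply/setP => x; have [->|x0] := eqVneq x 0; first by rewrite !(negbTE (cyc0 _ _)).
by have [a ->] := expw_onto x0; rewrite !mem_cyc ijE.
Qed.

(* |C_i^(N)| = n / N, the elements w^(i + N k), k < n / N, being distinct. *)
Lemma card_cyc i : #|cyc w N i| = (n %/ N)%N.
Proof.
set d := (n %/ N)%N; have nE : n = (N * d)%N by rewrite /d mulnC divnK.
pose g (k : 'I_d) := w ^+ (i + N * k).
have g_inj : injective g.
  move=> k k' /eqP; rewrite /g expw_eq eqn_modDl nE -!muln_modr eqn_pmul2l //.
  by rewrite !modn_small // => /eqP /val_inj.
suff -> : cyc w N i = g @: setT by rewrite card_imset // cardsT card_ord.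
apply/setP => x; apply/imsetP/imsetP => -[k _ ->].
  have d_gt0 : (0 < d)%N by move: n_gt0; rewrite nE muln_gt0 => /andP [].
  exists (Ordinal (ltn_pmod k d_gt0)) => //; apply/eqP.
  have : (N * k == N * (k %% d) %[mod N * d])%N by rewrite -!muln_modr modn_mod.
  by rewrite /g expw_eq eqn_modDl -nE.
have lt_kn : (k < n)%N by rewrite (leq_trans (ltn_ord k)) // nE leq_pmull.
by exists (Ordinal lt_kn).
Qed.
End Divisor.

Lemma cyc_disj N M d i j x : (0 < N)%N -> (N %| n)%N -> (0 < M)%N -> (M %| n)%N ->
  (d %| N)%N -> (d %| M)%N -> i != j %[mod d] ->
  x \in cyc w N i -> x \in cyc w M j -> False.
Proof.
move=> N_gt0 Nn M_gt0 Mn dN dM /negP ij.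
have [->|x0] := eqVneq x 0; first by rewrite (negbTE (cyc0 _ _)).
have [a ->] := expw_onto x0; rewrite !mem_cyc // => /eqP aiE /eqP ajE; apply: ij.
by rewrite -(modn_dvdm i dN) -aiE (modn_dvdm _ dN) -(modn_dvdm j dM) -ajE (modn_dvdm _ dM).
Qed.

Lemma opp_expw a : ~~ odd n -> - w ^+ a = w ^+ (a + n./2).
Proof.
move=> n_even; have n2E : n = (n./2 * 2)%N by rewrite -{1}(odd_double_half n) (negbTE n_even) muln2.
suff half : w ^+ n./2 = -1 by rewrite exprD half mulrN1.
have half_ne1 : w ^+ n./2 != 1.
  rewrite -(expr0 w) expw_eq mod0n modn_small; last by move: n_gt0; rewrite {2}n2E; lia.
  by move: n_gt0; rewrite n2E; case: (n./2).
have : (w ^+ n./2) ^+ 2 == 1 by rewrite -exprM -n2E prim_expr_order.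
by rewrite sqrf_eq1 (negbTE half_ne1) => /eqP.
Qed.

(* The lines L_j = C_j^(q+1) of F = F_(q^2); they are the cosets w^j F_q^*
   of the multiplicative group of the subfield F_q. *)
Section Lines.
Variable q : nat.
Hypothesis card_F : #|F| = (q ^ 2)%N.
Hypothesis q_gt1 : (1 < q)%N.
Hypothesis q_char : [pchar F].-nat q.

Local Notation L j := (cyc w q.+1 j).

Lemma n_eq : n = ((q - 1) * q.+1)%N.
Proof. by rewrite card_F; nia. Qed.

Lemma Q_dvd_n : (q.+1 %| n)%N.
Proof. by rewrite n_eq dvdn_mull. Qed.

(* The subfield F_q of F, as the fixed points of x |-> x^q. *)
Definition subK : {set F} := [set x : F | x ^+ q == x].

Lemma subK_L0 x : x != 0 -> (x \in subK) = (x \in L 0).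
Proof.
move=> x0; have [a ->] := expw_onto x0.
rewrite inE mem_cyc ?Q_dvd_n // -exprM mulnC expw_eq mod0n.
rewrite eqn_mod_dvd ?leq_pmull 1?ltnW // -{2}(mul1n a) -mulnBl n_eq.
by rewrite dvdn_pmul2l // subn_gt0.
Qed.

(* F_q is an additive subgroup, by additivity of Frobenius x |-> x^q. *)
Lemma subK0 : (0 : F) \in subK.
Proof. by rewrite inE expr0n eqn0Ngt ltnW. Qed.

Lemma subKB x y : x \in subK -> y \in subK -> x - y \in subK.
Proof.
rewrite !inE => /eqP xq /eqP yq.
by rewrite exprDn_pchar // exprNn_pchar // xq yq.
Qed.

Lemma subKN x : x \in subK -> - x \in subK.
Proof. by move=> xK; rewrite -sub0r subKB ?subK0. Qed.

(* |F_q| = q, as F_q = {0} + L_0 and |L_0| = n / (q + 1) = q - 1. *)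
Lemma card_subK : #|subK| = q.
Proof.
have -> : subK = 0 |: L 0.
  apply/setP => x; rewrite in_setU1.
  by have [->|x0] := eqVneq x 0; rewrite ?subK0 //= subK_L0.
rewrite cardsU1 cyc0 card_cyc // ?Q_dvd_n // n_eq mulnK //.
by rewrite add1n subn1 prednK // ltnW.
Qed.

Lemma mem_L j x : (x \in L j) = [exists u in subK, (u != 0) && (x == w ^+ j * u)].
Proof.
have wj0 := expw_neq0 j.
apply/idP/existsP => [xL | [u /and3P [uK u0 /eqP ->]]].
  have x0 : x != 0 by apply: contraTneq xL => ->; rewrite cyc0.
  have u0 : x / w ^+ j != 0 by rewrite mulf_neq0 ?invr_eq0.
  exists (x / w ^+ j); rewrite [w ^+ j * _]mulrC divfK // eqxx u0 andbT subK_L0 //.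
  have [a xE] := expw_onto x0; have [b uE] := expw_onto u0.
  have : w ^+ (j + b) = w ^+ a by rewrite exprD -uE -xE mulrC divfK.
  move: xL; rewrite uE xE !mem_cyc ?Q_dvd_n // andbT => /eqP ajE /eqP.
  rewrite expw_eq => /eqP jbE; rewrite -(eqn_modDl j) addn0.
  by rewrite -(modn_dvdm (j + b) Q_dvd_n) jbE (modn_dvdm _ Q_dvd_n) ajE.
have [b uE] := expw_onto u0.
move: uK; rewrite subK_L0 // uE -exprD !mem_cyc // ?Q_dvd_n // mod0n => /eqP bE.
by rewrite -modnDmr bE addn0.
Qed.

(* For j <> k (mod q + 1), F = w^j F_q (+) w^k F_q as an F_q-vector space; every
   z \in F thus has unique coordinates (u, v) with z = w^j u - w^k v. *)
Section LinePair.
Context {j k : nat}.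
Hypothesis jk : j != k %[mod q.+1].

Local Notation lin u v := (w ^+ j * u - w ^+ k * v).

Lemma lin_inj {u v u' v' : F} : u \in subK -> v \in subK -> u' \in subK -> v' \in subK ->
  lin u v = lin u' v' -> u = u' /\ v = v'.
Proof.
move=> uK vK u'K v'K /eqP; rewrite -subr_eq0.
have -> : lin u v - lin u' v' = w ^+ j * (u - u') - w ^+ k * (v - v') by ring.
rewrite subr_eq0 => /eqP duv.
suff [du0 dv0] : u - u' = 0 /\ v - v' = 0 by split; apply: subr0_eq.
have wj0 := expw_neq0 j; have wk0 := expw_neq0 k.
have [du0|du0] := eqVneq (u - u') 0.
  split=> //; move: duv; rewrite du0 mulr0 => /esym /eqP.
  by rewrite mulf_eq0 (negbTE wk0) => /eqP.
have dv0 : v - v' != 0.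
  by apply: contra_neq du0 => dv0; move: duv; rewrite dv0 mulr0 => /eqP; rewrite mulf_eq0 (negbTE wj0) => /eqP.
(* otherwise w^j (u - u') would lie on both lines L_j and L_k *)
exfalso; apply: (@cyc_disj q.+1 q.+1 q.+1 j k (w ^+ j * (u - u'))) => //; try exact: Q_dvd_n.
  by rewrite mem_L; apply/existsP; exists (u - u'); rewrite subKB // du0 eqxx.
by rewrite mem_L duv; apply/existsP; exists (v - v'); rewrite subKB // dv0 eqxx.
Qed.

(* By counting, (u, v) |-> w^j u - w^k v is onto F. *)
Lemma lin_onto z : exists u v, [/\ u \in subK, v \in subK & z = lin u v].
Proof.
pose Phi (p : F * F) := lin p.1 p.2.
suff /setP /(_ z) : Phi @: setX subK subK = setT.
  by rewrite inE => /imsetP [[u v]]; rewrite in_setX => /andP [uK vK] ->; exists u, v.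
apply/eqP; rewrite eqEcard subsetT cardsT card_in_imset /=.
  by rewrite cardsX card_subK card_F mulnn.
move=> [u v] [u' v']; rewrite !in_setX => /andP [uK vK] /andP [u'K v'K] Phi_eq.
by case: (lin_inj uK vK u'K v'K Phi_eq) => -> ->.
Qed.

Section Coordinates.
Context {z u v : F}.
Hypotheses (uK : u \in subK) (vK : v \in subK) (zE : z = lin u v).

Lemma coord_L_left : (z \in L j) = (u != 0) && (v == 0).
Proof.
rewrite mem_L; apply/existsP/andP => [[u' /and3P [u'K u'0 /eqP zE']] | [u0 /eqP v0]].
  have [<- <-] : u' = u /\ 0 = v by apply: lin_inj; rewrite ?subK0 // -zE zE' mulr0 subr0.
  by rewrite u'0 eqxx.
by exists u; rewrite uK u0 zE v0 mulr0 subr0 eqxx.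
Qed.

Lemma coord_L_right : (z \in L k) = (u == 0) && (v != 0).
Proof.
rewrite mem_L; apply/existsP/andP => [[v' /and3P [v'K v'0 /eqP zE']] | [/eqP u0 v0]].
  have [<- <-] : 0 = u /\ - v' = v.
    by apply: lin_inj; rewrite ?subK0 ?subKN // -zE zE' mulr0 sub0r mulrN opprK.
  by rewrite oppr_eq0 v'0 eqxx.
by exists (- v); rewrite subKN // oppr_eq0 v0 zE u0 mulr0 sub0r mulrN eqxx.
Qed.

Lemma coord_nz : (z != 0) = (u != 0) || (v != 0).
Proof.
apply/idP/idP; apply: contraTT; rewrite negb_or !negbK.
  by case/andP => /eqP u0 /eqP v0; rewrite zE u0 v0 !mulr0 subr0.
move=> /eqP z0; have [<- <-] : 0 = u /\ 0 = v.
  by apply: lin_inj; rewrite ?subK0 // -zE z0 !mulr0 subr0.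
by rewrite eqxx.
Qed.

Lemma coord_pair y : (z + y \in L j) && (y \in L k) = [&& u != 0, v != 0 & y == w ^+ k * v].
Proof.
rewrite !mem_L; apply/andP/and3P => [[/existsP [u' /and3P [u'K u'0 /eqP e1]]
  /existsP [v' /and3P [v'K v'0 /eqP e2]]] | [u0 v0 /eqP ->]].
  have [<- <-] : u' = u /\ v' = v by apply: lin_inj; rewrite // -e1 -e2 -zE addrK.
  by rewrite u'0 v'0 e2 eqxx.
split; apply/existsP; first by exists u; rewrite uK u0 zE subrK eqxx.
by exists v; rewrite vK v0 eqxx.
Qed.
End Coordinates.

Lemma corr_lines z : corr (ind (L j)) (ind (L k)) z = nonzero z - ind (L j) z - ind (L k) z.
Proof.
have [u [v [uK vK zE]]] := lin_onto z.
rewrite /corr (eq_bigr (fun y => ([&& u != 0, v != 0 & y == w ^+ k * v] : int))); last first.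
  by move=> y _; rewrite -(coord_pair uK vK zE) /ind; case: (_ \in _); case: (_ \in _).
have -> : \sum_(y : F) ([&& u != 0, v != 0 & y == w ^+ k * v] : int) = (u != 0) && (v != 0).
  have [/andP [u0 v0] | uv] := boolP ((u != 0) && (v != 0)).
    rewrite (bigD1 (w ^+ k * v)) //= u0 v0 eqxx big1 ?addr0 // => y /negbTE ->.
    by rewrite !andbF.
  by rewrite big1 // => y _; move: uv; case: (u != 0); case: (v != 0).
rewrite /nonzero /ind (coord_nz uK vK zE) (coord_L_left uK vK zE) (coord_L_right uK vK zE).
by case: (u == 0); case: (v == 0).
Qed.
End LinePair.

(* Each line is symmetric, since -1 \in F_q. *)
Lemma L_sym j t : ind (L j) (- t) = ind (L j) t.
Proof.
suff memN x : x \in L j -> - x \in L j.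
  by rewrite /ind (_ : (- t \in L j) = (t \in L j)) //; apply/idP/idP => /memN //; rewrite opprK.
rewrite !mem_L => /existsP [u /and3P [uK u0 /eqP ->]]; apply/existsP.
by exists (- u); rewrite subKN // oppr_eq0 u0 mulrN eqxx.
Qed.

Lemma card_L j : #|L j| = (q - 1)%N.
Proof. by rewrite card_cyc // ?Q_dvd_n // n_eq mulnK. Qed.

Lemma corr_line_families p r (s : 'I_p -> nat) (t : 'I_r -> nat) z :
  (forall i k, s i != t k %[mod q.+1]) ->
  corr (fun x => \sum_(i < p) ind (L (s i)) x) (fun x => \sum_(k < r) ind (L (t k)) x) z =
  p%:Z * r%:Z * nonzero z - r%:Z * \sum_(i < p) ind (L (s i)) z - p%:Z * \sum_(k < r) ind (L (t k)) z.
Proof.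
move=> st; rewrite corr_suml.
under eq_bigr => i _ do rewrite corr_sumr.
under eq_bigr => i _ do under eq_bigr => k _ do rewrite (corr_lines (st i k)).
under eq_bigr => i _ do rewrite !sumrB sumr_const card_ord [X in _ - X - _]sumr_const card_ord.
rewrite !sumrB !sumr_const !card_ord; congr (_ - _ - _).
- by rewrite -mulrnA -mulr_natl natz mulnC PoszM.
- by rewrite mulr_sumr; apply: eq_bigr => i _; rewrite -natz mulr_natl.
- by rewrite -natz mulr_natl.
Qed.

(* From now on q = 8m + 3, so that 4 | q + 1 and 8 | n. *)
Section QuarterPrime.
Variable m : nat.
Hypothesis q_eq : q = (8 * m + 3)%N.

Lemma Q_eq : q.+1 = (8 * m + 4)%N.
Proof. by rewrite q_eq; lia. Qed.

Lemma four_dvd_Q : (4 %| q.+1)%N.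
Proof. by apply/dvdnP; exists (2 * m + 1)%N; rewrite Q_eq; lia. Qed.

Lemma n_double : n = ((4 * m + 1) * (8 * m + 4)).*2%N.
Proof. by rewrite n_eq q_eq -muln2; nia. Qed.

Lemma eight_dvd_n : (8 %| n)%N.
Proof. by apply/dvdnP; exists ((4 * m + 1) * (2 * m + 1))%N; rewrite n_double -muln2; nia. Qed.

(* -1 = w^(n/2) with n/2 = 4 (mod 8), so negation shifts the exponent by 4 mod 8
   and by 0 mod q + 1. *)
Lemma opp_expw8 a : - w ^+ a = w ^+ (a + n./2) /\ (a + n./2 = a + 4 %[mod 8])%N.
Proof.
rewrite opp_expw ?n_double ?odd_double // doubleK; split=> //.
rewrite (_ : (4 * m + 1) * (8 * m + 4) = 4 + (4 * m + 3) * m * 8)%N; last by nia.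
by rewrite addnA -modnDmr modnMl addn0.
Qed.

Definition lines_from (c : nat) (x : F) : int := \sum_(k < m) ind (L (c + 4 * k)) x.

Definition lines_mod4 (r : nat) (x : F) : int :=
  \sum_(k < (2 * m).+1) ind (L (r %% 4 + 4 * k)) x.

Lemma lines_from_sym c t : lines_from c (- t) = lines_from c t.
Proof. by apply: eq_bigr => k _; rewrite L_sym. Qed.

Lemma sum_lines_from c : \sum_(x : F) lines_from c x = m%:Z * (q - 1)%:Z.
Proof.
rewrite exchange_big /= (eq_bigr (fun _ => (q - 1)%:Z)) => [|k _]; last by rewrite sum_ind card_L.
by rewrite sumr_const card_ord -mulr_natl natz.
Qed.

(* Since 4 | q + 1, w^a lies in D_r iff a = r (mod 4). *)
Lemma lines_mod4_expw r a : lines_mod4 r (w ^+ a) = (a == r %[mod 4])%N.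
Proof.
rewrite /lines_mod4 (eq_bigr (fun k : 'I_(2 * m).+1 => Posz (a %% q.+1 == r %% 4 + 4 * k)%N)).
  rewrite -(big_morph Posz PoszD (erefl _)); congr Posz.
  rewrite -(modn_dvdm a four_dvd_Q) count_progression ?ltn_pmod //.
  by have := ltn_pmod a (ltn0Sn q); rewrite Q_eq; lia.
move=> k _; rewrite /ind mem_cyc ?Q_dvd_n // [X in _ == X]modn_small //.
by have := ltn_ord k; have := ltn_pmod r (isT : (0 < 4)%N); rewrite Q_eq; lia.
Qed.

Lemma lines_mod4_0 r : lines_mod4 r 0 = 0.
Proof. by rewrite /lines_mod4 big1 // => k _; rewrite /ind (negbTE (cyc0 _ _)). Qed.

Lemma lines_mod4_partition c z :
  lines_mod4 c z + lines_mod4 (c + 1) z + lines_mod4 (c + 2) z + lines_mod4 (c + 3) z = nonzero z.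
Proof.
have [->|z0] := eqVneq z 0; first by rewrite !lines_mod4_0 /nonzero eqxx.
have [a ->] := expw_onto z0; rewrite !lines_mod4_expw /nonzero expw_neq0; lia.
Qed.

Lemma neq_modQ a b : (a != b %[mod 4])%N -> (a != b %[mod q.+1])%N.
Proof. by apply: contra => /eqP ab; rewrite -(modn_dvdm a four_dvd_Q) ab modn_dvdm ?four_dvd_Q. Qed.

Lemma corr_mod4_from r c z : (r != c %[mod 4])%N ->
  corr (lines_mod4 r) (lines_from c) z =
  ((2 * m).+1)%:Z * m%:Z * nonzero z - m%:Z * lines_mod4 r z - ((2 * m).+1)%:Z * lines_from c z.
Proof.
move=> rc; apply: (@corr_line_families _ _ (fun k : 'I_(2 * m).+1 => r %% 4 + 4 * k)%N
  (fun k : 'I_m => c + 4 * k)%N) => i k.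
by apply: neq_modQ; apply: contra rc => /eqP rcE; apply/eqP; lia.
Qed.

Lemma corr_from_from c c' z : (c != c' %[mod 4])%N ->
  corr (lines_from c) (lines_from c') z =
  m%:Z * m%:Z * nonzero z - m%:Z * lines_from c z - m%:Z * lines_from c' z.
Proof.
move=> cc'; apply: (@corr_line_families _ _ (fun k : 'I_m => c + 4 * k)%N
  (fun k : 'I_m => c' + 4 * k)%N) => i k.
by apply: neq_modQ; apply: contra cc' => /eqP ccE; apply/eqP; lia.
Qed.

Lemma corr_pair_lines (a a' : F -> int) c c' z : (c != c' %[mod 4])%N ->
  (forall t, a t + a (- t) = nonzero t - lines_mod4 c t) ->
  (forall t, a' t + a' (- t) = nonzero t - lines_mod4 c' t) ->
  corr (fun x => a x + lines_from c x) (fun x => a' x + lines_from c' x) z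
  + corr (fun x => a' x + lines_from c' x) (fun x => a x + lines_from c x) z
  = corr a a' z + corr a' a z + 2%:Z * m%:Z * (q - 1)%:Z - 2%:Z * m%:Z * (m%:Z + 1) * nonzero z
    + m%:Z * (lines_mod4 c z + lines_mod4 c' z).
Proof.
move=> cc' a_sym a'_sym; have c'c : (c' != c %[mod 4])%N by rewrite eq_sym.
have aB' := @corr_add_swap _ a (lines_from c') _ z (lines_from_sym c') a_sym.
have a'B := @corr_add_swap _ a' (lines_from c) _ z (lines_from_sym c) a'_sym.
rewrite corrBl corr_nonzero sum_lines_from lines_from_sym (corr_mod4_from _ _ _ cc') in aB'.
rewrite corrBl corr_nonzero sum_lines_from lines_from_sym (corr_mod4_from _ _ _ c'c) in a'B.
rewrite !corrDl !corrDr (corr_from_from _ _ _ cc') (corr_from_from _ _ _ c'c).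
rewrite -[corr a (lines_from c') z](addrK (corr (lines_from c') a z)) aB'.
rewrite -[corr a' (lines_from c) z](addrK (corr (lines_from c) a' z)) a'B.
rewrite (_ : Posz (2 * m).+1 = 2%:Z * m%:Z + 1); last by rewrite -addn1 PoszD PoszM.
ring.
Qed.

Section Construction.
Variables (I : {set 'I_8}) (y : 'I_8).
Hypothesis card_I : #|I| = 3%N.
Hypothesis I_antipodal : forall x : 'I_8, x \in I -> (inord ((x + 4) %% 8) : 'I_8) \notin I.
Hypothesis yI : y \in I.
Hypothesis y_parity : forall x : 'I_8, x \in I -> x != y -> odd x != odd y.

Definition classes (s : nat) (x : F) : int := \sum_(i in I) ind (cyc w 8 (i + s)) x.

(* The classes C_(i+s), i \in I, together with their negatives C_(i+s+4) and the
   lines with index y + 2 + s (mod 4), partition F^*. *)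
Lemma classes_sym s c t : (c = y + 2 + s %[mod 4])%N ->
  classes s t + classes s (- t) = nonzero t - lines_mod4 c t.
Proof.
move=> cE; have [->|t0] := eqVneq t 0.
  rewrite oppr0 lines_mod4_0 /nonzero eqxx /classes big1 ?addr0 ?subr0 // => i _.
  by rewrite /ind (negbTE (cyc0 _ _)).
have [a ->] := expw_onto t0; have [-> aE] := opp_expw8 a.
rewrite lines_mod4_expw /nonzero expw_neq0 /classes.
rewrite (eq_bigr (fun i : 'I_8 => Posz (a == i + s %[mod 8])%N)) => [|i _]; last first.
  by rewrite /ind mem_cyc ?eight_dvd_n.
rewrite [X in _ + X = _](eq_bigr (fun i : 'I_8 => Posz (a + 4 == i + s %[mod 8])%N)) => [|i _];
  last by rewrite /ind mem_cyc ?eight_dvd_n // aE.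
rewrite -!(big_morph Posz PoszD (erefl _)).
have := @I_shift_partition I y card_I I_antipodal yI y_parity a s; rewrite -cE.
move: (\sum_(i in I) (a == i + s %[mod 8]))%N (\sum_(i in I) (a + 4 == i + s %[mod 8]))%N.
by case: (a == c %[mod 4]) => u v /= uv; lia.
Qed.

Lemma ind_classes_lines s c (f : nat -> nat) x : (c = y + 2 + s %[mod 4])%N ->
  (forall k, f k = c + 4 * k %[mod q.+1])%N ->
  ind ((\bigcup_(i in I) cyc w 8 (i + s)) :|: \bigcup_(k < m) L (f k)) x
  = classes s x + lines_from c x.
Proof.
move=> cE fE; have Q_gt0 : (0 < q.+1)%N by [].
rewrite ind_setU => [|/bigcupP [i iI xi] /bigcupP [k _ xk]]; last first.
  apply: (@cyc_disj 8 q.+1 4 (i + s) (f k) x) => //;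
    try solve [exact: eight_dvd_n | exact: Q_dvd_n | exact: four_dvd_Q].
  have /eqP ia := @I_avoids I y card_I I_antipodal yI y_parity i iI.
  rewrite -(modn_dvdm (f k) four_dvd_Q) fE (modn_dvdm _ four_dvd_Q).
  by apply/eqP => isE; apply: ia; lia.
rewrite !ind_bigcup => [|k k' _ _ kk'|i j iI jI ij].
- congr (_ + _); apply: eq_bigr => k _.
  by rewrite (@cyc_eq q.+1 Q_gt0 Q_dvd_n _ _ (fE k)).
- apply: (@cyc_disj q.+1 q.+1 q.+1 (f k) (f k') x) => //; try exact: Q_dvd_n.
  have lt_k := ltn_ord k; have lt_k' := ltn_ord k'.
  rewrite fE [X in _ != X]fE eqn_modDl !modn_small ?Q_eq; try lia.
  by apply: contra kk' => /eqP kkE; rewrite -val_eqE /=; apply/eqP; lia.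
- apply: (@cyc_disj 8 8 8 (i + s) (j + s) x) => //; try exact: eight_dvd_n.
  by rewrite eqn_modDr !modn_small.
Qed.

Lemma ind_E0 x : ind (E0 w q m y I) x = classes 0 x + lines_from (y + 2) x.
Proof.
rewrite /E0 (eq_bigr (fun i : 'I_8 => cyc w 8 (i + 0))) => [|i _]; last by rewrite addn0.
apply: (ind_classes_lines _ _ (fun k => (y + 2 + 4 * k) %% q.+1)%N) => [|k].
  by rewrite addn0.
by rewrite modn_mod.
Qed.

Lemma ind_E1 x : ind (E1 w q m y I) x = classes 2 x + lines_from y x.
Proof.
apply: (ind_classes_lines _ _ (fun k => (y + 4 * k) %% q.+1)%N) => [|k]; last by rewrite modn_mod.
by lia.
Qed.

Lemma ind_E2 x : ind (E2 w q m y I) x = classes 1 x + lines_from (y + 3) x.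
Proof.
apply: (ind_classes_lines _ _ (fun k => (y + 2 + 4 * k) %% q.+1 + 1)%N) => [|k]; first by lia.
by rewrite modnDml; congr modn; lia.
Qed.

Lemma ind_E3 x : ind (E3 w q m y I) x = classes 3 x + lines_from (y + 1) x.
Proof.
apply: (ind_classes_lines _ _ (fun k => (y + 4 * k) %% q.+1 + 1)%N) => [|k]; first by lia.
by rewrite modnDml; congr modn; lia.
Qed.

Definition cross (s s' : nat) (z : F) : int :=
  \sum_(i in I) \sum_(j in I) grmulinv (cyc w 8 (i + s)) (cyc w 8 (j + s')) z.

Lemma corr_classes s s' z : corr (classes s) (classes s') z = cross s s' z.
Proof.
rewrite corr_suml; apply: eq_bigr => i _; rewrite corr_sumr; apply: eq_bigr => j _.
by rewrite grmulinvE.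
Qed.

Lemma grmulinv_E01 z :
  grmulinv (E0 w q m y I) (E1 w q m y I) z + grmulinv (E1 w q m y I) (E0 w q m y I) z
  = cross 0 2 z + cross 2 0 z + 2%:Z * m%:Z * (q - 1)%:Z - 2%:Z * m%:Z * (m%:Z + 1) * nonzero z
    + m%:Z * (lines_mod4 (y + 2) z + lines_mod4 y z).
Proof.
rewrite !grmulinvE (eq_corr z ind_E0 ind_E1) (eq_corr z ind_E1 ind_E0) -!corr_classes.
by apply: corr_pair_lines => [|t|t]; try apply: classes_sym; lia.
Qed.

Lemma grmulinv_E23 z :
  grmulinv (E2 w q m y I) (E3 w q m y I) z + grmulinv (E3 w q m y I) (E2 w q m y I) z
  = cross 1 3 z + cross 3 1 z + 2%:Z * m%:Z * (q - 1)%:Z - 2%:Z * m%:Z * (m%:Z + 1) * nonzero z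
    + m%:Z * (lines_mod4 (y + 3) z + lines_mod4 (y + 1) z).
Proof.
rewrite !grmulinvE (eq_corr z ind_E2 ind_E3) (eq_corr z ind_E3 ind_E2) -!corr_classes.
by apply: corr_pair_lines => [|t|t]; try apply: classes_sym; lia.
Qed.

Lemma cross_terms z :
  \sum_(h < 2) \sum_(i in I) \sum_(j in I)
    (grmulinv (cyc w 8 (i + h)) (cyc w 8 (j + 2 + h)) z
     + grmulinv (cyc w 8 (i + 2 + h)) (cyc w 8 (j + h)) z)
  = cross 0 2 z + cross 2 0 z + (cross 1 3 z + cross 3 1 z).
Proof.
rewrite big_ord_recr big_ord_recr big_ord0 /= add0r /cross.
by congr (_ + _); rewrite -!big_split; apply: eq_bigr => i _; rewrite -big_split;
  apply: eq_bigr => j _; rewrite ?addn0 -?addnA.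
Qed.

(* The identity itself: the two pairs contribute 4m(q - 1) = 8m(4m + 1) on every z,
   minus 4m(m + 1) on F^*, plus m (D_y + D_(y+1) + D_(y+2) + D_(y+3)) = m F^*. *)
Lemma E_identity z :
  grmulinv (E0 w q m y I) (E1 w q m y I) z + grmulinv (E1 w q m y I) (E0 w q m y I) z
  + grmulinv (E2 w q m y I) (E3 w q m y I) z + grmulinv (E3 w q m y I) (E2 w q m y I) z
  = \sum_(h < 2) \sum_(i in I) \sum_(j in I)
      (grmulinv (cyc w 8 (i + h)) (cyc w 8 (j + 2 + h)) z
       + grmulinv (cyc w 8 (i + 2 + h)) (cyc w 8 (j + h)) z)
    + (8 * m * (4 * m + 1) * (z == 0%R :> F))%N%:Z
    + (m * (28 * m + 5) * (z != 0%R :> F))%N%:Z.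
Proof.
rewrite -addrA grmulinv_E01 grmulinv_E23 cross_terms.
have lines_m : m%:Z * (lines_mod4 (y + 2) z + lines_mod4 y z)
    + m%:Z * (lines_mod4 (y + 3) z + lines_mod4 (y + 1) z) = m%:Z * nonzero z.
  by rewrite -(lines_mod4_partition y z); ring.
by move: lines_m; rewrite /nonzero q_eq; case: (z == 0) => /= lines_m; lia.
Qed.
End Construction.
End QuarterPrime.
End Lines.
End CyclotomicClasses.

Theorem lemma3p3 (F : finFieldType) (q m : nat) (w : F) (I : {set 'I_8}) (y : 'I_8) :
  (exists p k : nat, prime p /\ (0 < k)%N /\ q = (p ^ k)%N) ->
  (1 <= m)%N -> q = (8 * m + 3)%N -> #|F| = (q ^ 2)%N ->
  (#|F|.-1).-primitive_root w ->
  #|I| = 3%N ->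
  (forall x : 'I_8, x \in I -> (inord ((x + 4) %% 8) : 'I_8) \notin I) ->
  y \in I -> (forall x : 'I_8, x \in I -> x != y -> odd x != odd y) ->
  forall z : F,
    grmulinv (E0 w q m y I) (E1 w q m y I) z + grmulinv (E1 w q m y I) (E0 w q m y I) z
    + grmulinv (E2 w q m y I) (E3 w q m y I) z + grmulinv (E3 w q m y I) (E2 w q m y I) z
    = \sum_(h < 2) \sum_(i in I) \sum_(j in I)
        (grmulinv (cyc w 8 (i + h)) (cyc w 8 (j + 2 + h)) z
         + grmulinv (cyc w 8 (i + 2 + h)) (cyc w 8 (j + h)) z)
      + (8 * m * (4 * m + 1) * (z == 0%R :> F))%N%:Z
      + (m * (28 * m + 5) * (z != 0%R :> F))%N%:Z.
Proof.
move=> [p [k [p_prime [_ qE]]]] _ q_eq card_F w_prim card_I I_antipodal yI y_parity z.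
have q_gt1 : (1 < q)%N by rewrite q_eq addn3.
(* q is a power of the characteristic p of F, since #|F| = p^(2k). *)
have q_char : [pchar F].-nat q.
  have pF : p \in [pchar F] by apply: (@card_finPcharP F p (k * 2)); rewrite // card_F qE -expnM.
  by rewrite qE pnatX (pnatE _ p_prime) pF.
exact: (@E_identity F w w_prim q card_F q_gt1 q_char m q_eq I y card_I I_antipodal yI y_parity z).
Qed.
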